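(* Let $n\ge1$, $H\in\mathbb{R}^{n\times n}$ symmetric positive semidefinite, $h\in\mathbb{R}^n$ with $h\neq0$, $\lambda=\frac{1}{4\sqrt2\|h\|_2}$, and $\epsilon>0$. Let $(z^k,v^k,s^k)_{k\ge0}$ be generated by the predictor–corrector algorithm described in the context, initialized with $z^0=0$, $\gamma^0=\mathbf{1}_n-\lambda h$, $\theta^0=\mathbf{1}_n+\lambda h$, $\phi^0=\psi^0=\mathbf{1}_n$ (so $v^0=(\gamma^0,\theta^0)$, $s^0=(\phi^0,\psi^0)$). Then for every $k$, \[ \mu^{k+1}\le\Big(1-\frac{0.2348}{\sqrt{2n}}\Big)^2\mu^k , \] and the algorithm (which stops at the first $k$ with $(v^k)^\top s^k\le\epsilon$) requires at most \[ N_{\max}=\left\lceil\frac{\log\big(\frac{2n}{\epsilon}\big)}{-2\log\big(1-\frac{0.2348}{\sqrt{2n}}\big)}\right\rceil \] iterations, i.e. $(v^k)^\top s^k\le\epsilon$ holds for all $k\ge N_{\max}$.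
   Context: Box-QP: $\min_{z}\frac12 z^\top Hz+z^\top h$ s.t. $-\mathbf{1}_n\le z\le\mathbf{1}_n$, with objective scaled by $2\lambda$ (which does not change the minimizer). Variables: $z\in\mathbb{R}^n$, $v=(\gamma,\theta)\in\mathbb{R}^{2n}$, $s=(\phi,\psi)\in\mathbb{R}^{2n}$. With $\Omega=[I_n,-I_n]$, the Newton system at $(z,v,s)$ with parameters $\sigma,\mu$ is $(2\lambda H)\Delta z+\Omega\Delta v=0$, $\Omega^\top\Delta z+\Delta s=0$, $s\odot\Delta v+v\odot\Delta s=\sigma\mu\mathbf{1}_{2n}-v\odot s$. Algorithm, iteration $k$: set $\mu^k=\frac{(v^k)^\top s^k}{2n}$; let $(\Delta z_p,\Delta v_p,\Delta s_p)$ solve the Newton system at $(z^k,v^k,s^k)$ with $\sigma=0$, $\mu=\mu^k$; $\Delta\mu_p=\frac{\Delta v_p^\top\Delta s_p}{2n}$; $\alpha^k=\min\big(\frac12,\sqrt{\mu^k/(8\|\Delta v_p\odot\Delta s_p-\Delta\mu_p\mathbf{1}_{2n}\|)}\big)$ (square-root term read as $+\infty$ if the norm is $0$); $(\hat z^k,\hat v^k,\hat s^k)=(z^k,v^k,s^k)+\alpha^k(\Delta z_p,\Delta v_p,\Delta s_p)$; $\hat\mu^k=\frac{(\hat v^k)^\top\hat s^k}{2n}$; let $(\Delta z_c,\Delta v_c,\Delta s_c)$ solve the Newton system at $(\hat z^k,\hat v^k,\hat s^k)$ with $\sigma=1$, $\mu=\hat\mu^k$; $(z^{k+1},v^{k+1},s^{k+1})=(\hat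 z^k,\hat v^k,\hat s^k)+(\Delta z_c,\Delta v_c,\Delta s_c)$. $\odot$ is the Hadamard product, $\mathbf{1}_m$ the all-ones vector, $\|\cdot\|$ the Euclidean norm. *)

From HB Require Import structures.
From mathcomp Require Import all_boot all_order all_algebra.
From mathcomp Require Import all_classical all_reals all_analysis.
Set Implicit Arguments. Unset Strict Implicit. Unset Printing Implicit Defensive.
Import Order.TTheory GRing.Theory Num.Theory.
Local Open Scope ring_scope.

Section Defs.
Variable R : realType.

Definition hadam m (a b : 'cV[R]_m) : 'cV[R]_m := \col_i (a i 0 * b i 0).
Definition dotv m (a b : 'cV[R]_m) : R := \sum_i a i 0 * b i 0.
Definition norm2 m (a : 'cV[R]_m) : R := Num.sqrt (dotv a a).
Definition ones m : 'cV[R]_m := const_mx 1.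

Definition Omega n : 'M[R]_(n, n + n) := row_mx 1%:M (- 1%:M).

Definition mu_of n (v s : 'cV[R]_(n + n)) : R := dotv v s / (2 * n)%:R.

Definition newton_sol n (lam : R) (H : 'M[R]_n)
  (v s : 'cV[R]_(n + n)) (sigma mu : R)
  (dz : 'cV[R]_n) (dv ds : 'cV[R]_(n + n)) : Prop :=
  [/\ ((2 * lam) *: H) *m dz + Omega n *m dv = 0,
      (Omega n)^T *m dz + ds = 0 &
      hadam s dv + hadam v ds = (sigma * mu) *: ones (n + n) - hadam v s].

(* alpha^k = min(1/2, sqrt(mu/(8 nrm))), square-root term = +oo when nrm = 0 *)
Definition alpha_of (mu nrm : R) : R :=
  if nrm == 0 then 1 / 2 else Num.min (1 / 2) (Num.sqrt (mu / (8 * nrm))).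

Definition pc_step n (lam : R) (H : 'M[R]_n)
  (z : 'cV[R]_n) (v s : 'cV[R]_(n + n))
  (z' : 'cV[R]_n) (v' s' : 'cV[R]_(n + n)) : Prop :=
  exists (dzp : 'cV[R]_n) (dvp dsp : 'cV[R]_(n + n))
         (dzc : 'cV[R]_n) (dvc dsc : 'cV[R]_(n + n)),
    let mu := mu_of v s in
    newton_sol lam H v s 0 mu dzp dvp dsp /\
    let dmu := dotv dvp dsp / (2 * n)%:R in
    let alpha := alpha_of mu
        (norm2 (hadam dvp dsp - dmu *: ones (n + n))) in
    let zh := z + alpha *: dzp in
    let vh := v + alpha *: dvp in
    let sh := s + alpha *: dsp in
    newton_sol lam H vh sh 1 (mu_of vh sh) dzc dvc dsc /\
    [/\ z' = zh + dzc, v' = vh + dvc & s' = sh + dsc].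

End Defs.

From HB Require Import structures.
From mathcomp Require Import all_boot all_order all_algebra.
From mathcomp Require Import all_classical all_reals all_analysis.
From mathcomp Require Import ring lra.
Import Order.TTheory GRing.Theory Num.Theory.
Set Implicit Arguments. Unset Strict Implicit. Unset Printing Implicit Defensive.
Local Open Scope ring_scope.

(* The iterates stay in the neighbourhood ||v o s - mu 1|| <= mu / 4 of the
   central path.  Eliminating dz from the Newton system shows
   dv^T ds = 2 lam dz^T H dz >= 0, and its last block row gives, componentwise,
   4 (v_i s_i) (dv_i ds_i) <= (sigma mu - v_i s_i) ^ 2.  With these two facts
   the predictor step with the prescribed alpha stays in the neighbourhood of
   radius mu / 2, multiplies mu by at most (1 - alpha / 2) ^ 2 and has
   alpha >= 0.59 / sqrt (2 n); the corrector step returns to radius mu / 4 and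
   multiplies mu by at most 1 + 1 / (16 n).  The product of the two factors is
   at most (1 - 0.2348 / sqrt (2 n)) ^ 2.  The starting point is in the
   neighbourhood with mu^0 = 1 because lam ||h|| = 1 / (4 sqrt 2), and the
   iteration count follows by taking logarithms. *)

Section Sums.
Variables (R : realFieldType) (m : nat).
Implicit Types f x y p e : 'I_m -> R.

Lemma ler_sum_term f i : (forall j, 0 <= f j) -> f i <= \sum_j f j.
Proof. by move=> f0; rewrite (bigD1 i) //= lerDl sumr_ge0. Qed.

Lemma sum_sqr_le_sqr_sum f : (forall i, 0 <= f i) ->
  \sum_i f i ^+ 2 <= (\sum_i f i) ^+ 2.
Proof.
move=> f0; rewrite [leRHS]expr2 mulr_suml; apply: ler_sum => i _.
by rewrite expr2 ler_wpM2l // ler_sum_term.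
Qed.

(* [p i ^+ 2 <= e i ^+ 2 + (e i - p i) ^+ 2], and both [e] and [e - p] are
   nonnegative with sums at most [\sum_i e i]. *)
Lemma sum_sqr_le_2sqr_sum p e : (forall i, p i <= e i) -> (forall i, 0 <= e i) ->
  0 <= \sum_i p i -> \sum_i p i ^+ 2 <= 2 * (\sum_i e i) ^+ 2.
Proof.
move=> pe e0 p0.
have d0 i : 0 <= e i - p i by rewrite subr_ge0.
have split_sqr : \sum_i p i ^+ 2 <= \sum_i e i ^+ 2 + \sum_i (e i - p i) ^+ 2.
  rewrite -big_split; apply: ler_sum => i _ /=; by have := e0 i; have := d0 i; nra.
have := sum_sqr_le_sqr_sum e0; have := sum_sqr_le_sqr_sum d0.
have E0 : 0 <= \sum_i e i by apply: sumr_ge0.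
have D0 : 0 <= \sum_i (e i - p i) by apply: sumr_ge0.
rewrite sumrB in D0 *; nra.
Qed.

Lemma sum_sqr_le0 x i : \sum_j x j ^+ 2 <= 0 -> x i = 0.
Proof.
move=> x0; apply/eqP; rewrite -sqrf_eq0 eq_le sqr_ge0 andbT.
by apply: le_trans _ x0; apply: ler_sum_term => j; apply: sqr_ge0.
Qed.

Lemma sum_mul_le x y X Y : 0 <= X -> 0 <= Y ->
  \sum_i x i ^+ 2 <= X ^+ 2 -> \sum_i y i ^+ 2 <= Y ^+ 2 ->
  \sum_i x i * y i <= X * Y.
Proof.
move=> X0 Y0 xX yY.
have [XY0|XYgt0] := eqVneq (X * Y) 0.
  move: (XY0) => /eqP; rewrite mulf_eq0 => /orP[/eqP X0'|/eqP Y0'].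
  - rewrite XY0 big1 // => i _; rewrite (@sum_sqr_le0 x i) ?mul0r //.
    by rewrite X0' expr0n in xX.
  - rewrite XY0 big1 // => i _; rewrite (@sum_sqr_le0 y i) ?mulr0 //.
    by rewrite Y0' expr0n in yY.
have XYpos : 0 < X * Y by rewrite lt_def XYgt0 mulr_ge0.
have amgm : \sum_i (2 * X * Y) * (x i * y i) <=
            Y ^+ 2 * \sum_i x i ^+ 2 + X ^+ 2 * \sum_i y i ^+ 2.
  rewrite !mulr_sumr -big_split; apply: ler_sum => i _ /=.
  by have := sqr_ge0 (Y * x i - X * y i); nra.
rewrite -mulr_sumr in amgm.
have := ler_wpM2l (sqr_ge0 Y) xX; have := ler_wpM2l (sqr_ge0 X) yY.
rewrite -(ler_pM2l XYpos); nra.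
Qed.

Lemma sum_sqrD_le x y X Y : 0 <= X -> 0 <= Y ->
  \sum_i x i ^+ 2 <= X ^+ 2 -> \sum_i y i ^+ 2 <= Y ^+ 2 ->
  \sum_i (x i + y i) ^+ 2 <= (X + Y) ^+ 2.
Proof.
move=> X0 Y0 xX yY; have := sum_mul_le X0 Y0 xX yY.
have -> : \sum_i (x i + y i) ^+ 2 =
    \sum_i x i ^+ 2 + 2 * \sum_i x i * y i + \sum_i y i ^+ 2.
  by rewrite mulr_sumr -!big_split; apply: eq_bigr => i _ /=; ring.
nra.
Qed.

Lemma sqr_dev_le_sum f c i : (f i - c) ^+ 2 <= \sum_j (f j - c) ^+ 2.
Proof. by apply: ler_sum_term => j; apply: sqr_ge0. Qed.

Lemma sum_sqrM_le c x X : \sum_i x i ^+ 2 <= X ^+ 2 ->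
  \sum_i (c * x i) ^+ 2 <= (c * X) ^+ 2.
Proof.
move=> xX; under eq_bigr do rewrite exprMn.
by rewrite -mulr_sumr exprMn ler_wpM2l ?sqr_ge0.
Qed.

Definition mean f := (\sum_i f i) / m%:R.

Lemma sum_mean f : (0 < m)%N -> \sum_i f i = mean f * m%:R.
Proof. by move=> m0; rewrite mulfVK // pnatr_eq0 -lt0n. Qed.

Lemma sum_sqr_centered_le f : (0 < m)%N ->
  \sum_i (f i - mean f) ^+ 2 <= \sum_i f i ^+ 2.
Proof.
move=> m0.
have -> : \sum_i (f i - mean f) ^+ 2 =
    \sum_i f i ^+ 2 - 2 * mean f * \sum_i f i + \sum_(i < m) mean f ^+ 2.
  by rewrite mulr_sumr -sumrB -big_split; apply: eq_bigr => i _ /=; ring.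
rewrite sumr_const card_ord -mulr_natr sum_mean //.
have := mulr_ge0 (sqr_ge0 (mean f)) (ler0n R m); lra.
Qed.

Lemma mean_gt0 f : (0 < m)%N -> (forall i, 0 < f i) -> 0 < mean f.
Proof.
move=> m0 f0; rewrite divr_gt0 ?ltr0n //.
by apply: lt_le_trans (f0 (Ordinal m0)) _; apply: ler_sum_term => i; apply: ltW.
Qed.

Definition central_nbhd (theta : R) (v s : 'I_m -> R) :=
  (forall i, 0 < v i /\ 0 < s i) /\
  \sum_i (v i * s i - mean (fun j => v j * s j)) ^+ 2
    <= (theta * mean (fun j => v j * s j)) ^+ 2.

End Sums.

Section NewtonDirection.
Variable R : realFieldType.

Lemma newton_line_prod (v s dv ds c t : R) : s * dv + v * ds = c - v * s ->
  (v + t * dv) * (s + t * ds) = (1 - t) * (v * s) + t * c + t ^+ 2 * (dv * ds).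
Proof. by move=> e; rewrite -[c](subrK (v * s)) -e; ring. Qed.

Lemma newton_line_mean m (v s dv ds : 'I_m -> R) c t : (0 < m)%N ->
  (forall i, s i * dv i + v i * ds i = c - v i * s i) ->
  mean (fun i => (v i + t * dv i) * (s i + t * ds i)) =
  (1 - t) * mean (fun i => v i * s i) + t * c + t ^+ 2 * mean (fun i => dv i * ds i).
Proof.
move=> m0 e; rewrite /mean (eq_bigr _ (fun i _ => newton_line_prod t (e i))).
rewrite !big_split /= -!mulr_sumr sumr_const card_ord.
by field; rewrite pnatr_eq0 -lt0n.
Qed.

Lemma newton_prod_le (v s dv ds : R) :
  4 * (v * s) * (dv * ds) <= (s * dv + v * ds) ^+ 2.
Proof. by have := sqr_ge0 (s * dv - v * ds); nra. Qed.

Lemma segment_gt0 (v a : R) : 0 < v ->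
  (forall t, 0 <= t <= 1 -> v + t * a != 0) -> 0 < v + a.
Proof.
move=> v0 nz; rewrite ltNge; apply/negP => va.
have a0 : a < 0 by lra.
have t01 : 0 <= v / - a <= 1.
  by apply/andP; split; [apply: divr_ge0 | rewrite ler_pdivrMr]; lra.
by have := nz _ t01; rewrite invrN mulrN mulNr mulfVK ?subrr ?eqxx ?lt_eqF.
Qed.

Lemma segment_prod_gt0 (v s a b : R) : 0 < v -> 0 < s ->
  (forall t, 0 <= t <= 1 -> 0 < (v + t * a) * (s + t * b)) ->
  0 < v + a /\ 0 < s + b.
Proof.
move=> v0 s0 pos; split; apply: segment_gt0 => // t /pos;
  by rewrite lt0r mulf_eq0 negb_or => /andP[/andP[]].
Qed.

End NewtonDirection.

Section Predictor.
Variables (R : realFieldType) (m : nat) (v s dv ds : 'I_m -> R).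
Let mu := mean (fun i => v i * s i).
Let dmu := mean (fun i => dv i * ds i).
Hypotheses (m_gt0 : (0 < m)%N) (vs_gt0 : forall i, 0 < v i /\ 0 < s i)
  (newton : forall i, s i * dv i + v i * ds i = 0 - v i * s i)
  (dvds_ge0 : 0 <= \sum_i dv i * ds i).

Let vs_pos i : 0 < v i * s i.
Proof. by case: (vs_gt0 i) => *; apply: mulr_gt0. Qed.

Let mu_gt0 : 0 < mu.
Proof. exact: mean_gt0. Qed.

Lemma predictor_prod_le i : dv i * ds i <= v i * s i / 4.
Proof.
have := newton_prod_le (v i) (s i) (dv i) (ds i).
rewrite newton sub0r sqrrN ler_pdivlMr //; have := vs_pos i; nra.
Qed.

Lemma predictor_dmu_bounds : 0 <= dmu <= mu / 4.
Proof.
rewrite divr_ge0 ?ler0n //= /dmu /mu /mean mulrAC ler_pM2r ?invr_gt0 ?ltr0n //.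
by rewrite mulr_suml; apply: ler_sum => i _; apply: predictor_prod_le.
Qed.

Lemma predictor_sum_sqr_le :
  \sum_i (dv i * ds i) ^+ 2 <= (m%:R * mu) ^+ 2 / 8.
Proof.
have e0 i : 0 <= v i * s i / 4 by rewrite divr_ge0 // ltW.
apply: le_trans (sum_sqr_le_2sqr_sum predictor_prod_le e0 dvds_ge0) _.
by rewrite -mulr_suml sum_mean // -/mu; lra.
Qed.

Variables (al T : R).
(* [lra] and [nra] ignore section hypotheses, so proofs restate the ones they need. *)
Hypotheses (vs_dev : \sum_i (v i * s i - mu) ^+ 2 <= (1 / 4 * mu) ^+ 2)
  (T_ge0 : 0 <= T) (dvds_dev : \sum_i (dv i * ds i - dmu) ^+ 2 <= T ^+ 2)
  (al_ge0 : 0 <= al) (al_le_half : al <= 1 / 2) (alT : al ^+ 2 * T <= mu / 8).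

Let path_mean t := (1 - t) * mu + t ^+ 2 * dmu.

(* By Minkowski the deviation is at most [(1 - t) mu / 4 + t ^+ 2 T], and
   [t ^+ 2 T <= mu / 8 <= (1 - t) mu / 4] because [t <= 1 / 2]. *)
Lemma predictor_path_dev t : 0 <= t <= al ->
  \sum_i ((v i + t * dv i) * (s i + t * ds i) - path_mean t) ^+ 2
    <= (1 / 2 * path_mean t) ^+ 2.
Proof.
move=> /andP[t0 tal].
have [dmu0 _] := andP predictor_dmu_bounds; have mu0 := mu_gt0.
under eq_bigr do rewrite (newton_line_prod t (newton _)) mulr0 addr0.
have X0 : 0 <= (1 - t) * (1 / 4 * mu).
  by apply: mulr_ge0; have := al_le_half; lra.
have Y0 : 0 <= t ^+ 2 * T by rewrite mulr_ge0 ?sqr_ge0.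
have tT : t ^+ 2 * T <= al ^+ 2 * T by rewrite ler_wpM2r //; nra.
have dev_sum := sum_sqrD_le (x := fun i => (1 - t) * (v i * s i - mu))
  (y := fun i => t ^+ 2 * (dv i * ds i - dmu)) X0 Y0.
have -> : \sum_i ((1 - t) * (v i * s i) + t ^+ 2 * (dv i * ds i) - path_mean t) ^+ 2
    = \sum_i ((1 - t) * (v i * s i - mu) + t ^+ 2 * (dv i * ds i - dmu)) ^+ 2.
  by apply: eq_bigr => i _; rewrite /path_mean; congr (_ ^+ 2); ring.
apply: le_trans (dev_sum (sum_sqrM_le _ vs_dev) (sum_sqrM_le _ dvds_dev)) _.
have tdmu := mulr_ge0 (sqr_ge0 t) dmu0.
have al_half := al_le_half; have alT' := alT.
have AB : (1 - t) * (1 / 4 * mu) + t ^+ 2 * T <= 1 / 2 * path_mean t.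
  by rewrite /path_mean; nra.
by rewrite ler_sqr ?nnegrE ?addr_ge0 //; apply: le_trans AB; rewrite addr_ge0.
Qed.

Lemma predictor_mean :
  mean (fun i => (v i + al * dv i) * (s i + al * ds i)) = path_mean al.
Proof. by rewrite (newton_line_mean _ m_gt0 newton) mulr0 addr0. Qed.

Lemma predictor_nbhd :
  central_nbhd (1 / 2) (fun i => v i + al * dv i) (fun i => s i + al * ds i).
Proof.
split; last by rewrite predictor_mean; apply: predictor_path_dev; rewrite al_ge0 lexx.
move=> i; have [vi si] := vs_gt0 i; apply: segment_prod_gt0 => // t /andP[t0 t1].
have tal : 0 <= t * al <= al by rewrite mulr_ge0 //= ler_piMl.
have [dmu0 _] := andP predictor_dmu_bounds.
have pm_gt0 : 0 < path_mean (t * al).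
  have : 0 < (1 - t * al) * mu.
    by apply: mulr_gt0 => //; rewrite subr_gt0; have := al_le_half; nra.
  by rewrite /path_mean; have := mulr_ge0 (sqr_ge0 (t * al)) dmu0; lra.
have := le_trans (sqr_dev_le_sum (fun j => (v j + t * al * dv j) * (s j + t * al * ds j))
  (path_mean (t * al)) i) (predictor_path_dev tal); rewrite !mulrA.
set w := _ * _; set P := path_mean _ in pm_gt0 *; nra.
Qed.

Lemma predictor_mean_le :
  mean (fun i => (v i + al * dv i) * (s i + al * ds i)) <= (1 - al / 2) ^+ 2 * mu.
Proof.
rewrite predictor_mean /path_mean; have [_ dmu4] := andP predictor_dmu_bounds.
by have := ler_wpM2l (sqr_ge0 al) dmu4; nra.
Qed.

End Predictor.

Section Corrector.
Variables (R : realFieldType) (m : nat) (v s dv ds : 'I_m -> R).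
Let mu := mean (fun i => v i * s i).
Hypotheses (m_gt0 : (0 < m)%N) (vs_nbhd : central_nbhd (1 / 2) v s)
  (newton : forall i, s i * dv i + v i * ds i = 1 * mu - v i * s i)
  (dvds_ge0 : 0 <= \sum_i dv i * ds i).

Let mu_gt0 : 0 < mu.
Proof.
have [vs_gt0 _] := vs_nbhd; rewrite /mu mean_gt0 // => i.
by have [vi si] := vs_gt0 i; apply: mulr_gt0.
Qed.

Let vs_ge i : mu / 2 <= v i * s i.
Proof.
have [_ dev] := vs_nbhd; rewrite -/mu in dev.
have := le_trans (sqr_dev_le_sum (fun j => v j * s j) mu i) dev.
by have := mu_gt0; move=> mu0 devi; nra.
Qed.

Lemma corrector_prod_le i : dv i * ds i <= (v i * s i - mu) ^+ 2 / (2 * mu).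
Proof.
have := newton_prod_le (v i) (s i) (dv i) (ds i).
rewrite newton mul1r -opprB sqrrN ler_pdivlMr; last by have := mu_gt0; lra.
have := vs_ge i; have := mu_gt0; have := sqr_ge0 (v i * s i - mu); nra.
Qed.

Lemma corrector_sum_bounds :
  \sum_i dv i * ds i <= mu / 8 /\ \sum_i (dv i * ds i) ^+ 2 <= mu ^+ 2 / 32.
Proof.
have mu0 := mu_gt0.
have e0 i : 0 <= (v i * s i - mu) ^+ 2 / (2 * mu) by rewrite divr_ge0 ?sqr_ge0 //; lra.
have sum_e : \sum_i (v i * s i - mu) ^+ 2 / (2 * mu) <= mu / 8.
  have [_ dev] := vs_nbhd; rewrite -mulr_suml ler_pdivrMr; last lra.
  by apply: le_trans dev _; rewrite -/mu; nra.
split; first by apply: le_trans sum_e; apply: ler_sum => i _; apply: corrector_prod_le.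
apply: le_trans (sum_sqr_le_2sqr_sum corrector_prod_le e0 dvds_ge0) _.
have E0 : 0 <= \sum_i (v i * s i - mu) ^+ 2 / (2 * mu) by apply: sumr_ge0.
by have := ler_pM E0 E0 sum_e sum_e; lra.
Qed.

Lemma corrector_prod i : (v i + dv i) * (s i + ds i) = mu + dv i * ds i.
Proof.
by have := newton_line_prod 1 (newton i); rewrite expr1n !mul1r subrr mul0r add0r.
Qed.

Lemma corrector_mean :
  mean (fun i => (v i + dv i) * (s i + ds i)) = mu + mean (fun i => dv i * ds i).
Proof.
rewrite /mean (eq_bigr _ (fun i _ => corrector_prod i)) big_split /=.
by rewrite sumr_const card_ord -[mu *+ m]mulr_natr mulrDl mulfK // pnatr_eq0 -lt0n.
Qed.

Lemma corrector_nbhd :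
  central_nbhd (1 / 4) (fun i => v i + dv i) (fun i => s i + ds i).
Proof.
have mu0 := mu_gt0; have [sum_le sum_sqr_le] := corrector_sum_bounds.
split=> [i|].
  have [vi si] := vs_nbhd.1 i; apply: segment_prod_gt0 => // t /andP[t0 t1].
  rewrite (newton_line_prod t (newton i)) mul1r.
  have pi2 := le_trans (ler_sum_term i (fun j => sqr_ge0 (dv j * ds j))) sum_sqr_le.
  have p_gt : - (mu / 4) < dv i * ds i by nra.
  have vs_t : (1 - t) * (mu / 2) <= (1 - t) * (v i * s i).
    by rewrite ler_wpM2l ?vs_ge // subr_ge0.
  have p_t : t ^+ 2 * (- (mu / 4)) <= t ^+ 2 * (dv i * ds i).
    by rewrite ler_wpM2l ?sqr_ge0 // ltW.
  have tt : t ^+ 2 <= t by rewrite expr2 ler_piMl.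
  nra.
have dmu0 : 0 <= mean (fun i => dv i * ds i) by rewrite divr_ge0.
rewrite corrector_mean; under eq_bigr do rewrite corrector_prod.
under eq_bigr do rewrite opprD addrACA subrr add0r.
apply: le_trans (sum_sqr_centered_le _ m_gt0) _; apply: le_trans sum_sqr_le _.
rewrite -/mu; nra.
Qed.

Lemma corrector_mean_le :
  mean (fun i => (v i + dv i) * (s i + ds i)) <= (1 + 1 / (8 * m%:R)) * mu.
Proof.
have [sum_le _] := corrector_sum_bounds.
rewrite corrector_mean mulrDl mul1r lerD2l /mean ler_pdivrMr ?ltr0n //.
suff -> : 1 / (8 * m%:R) * mu * m%:R = mu / 8 by [].
by field; rewrite pnatr_eq0 -lt0n.
Qed.

End Corrector.

Section Contraction.
Variable R : rcfType.

Lemma contraction_poly_le (u : R) : 0 < u -> u <= 5 / 7 ->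
  (1 + u ^+ 2 / 8) * (1 - 59 / 200 * u) ^+ 2 <= (1 - 2348 / 10000 * u) ^+ 2.
Proof.
move=> u0 u1; have u0' := ltW u0.
have h3 := mulr_ge0 u0' u0'; have h4 := mulr_ge0 h3 u0'; have h5 := mulr_ge0 h4 u0'.
have h1 : 0 <= u * (12 / 100 - 157 / 1000 * u) by apply: mulr_ge0; lra.
have h2 : 0 <= u * u * u * (7 / 100 - 11 / 1000 * u) by apply: mulr_ge0; [exact: h4 | lra].
rewrite !expr2; lra.
Qed.

(* With [u = 1 / sqrt M]: [al >= 0.59 u] because [(al sqrt M) ^+ 2 >= 0.35 > 0.59 ^+ 2],
   and [1 / (8 M) = u ^+ 2 / 8]. *)
Lemma pc_factor_le (M al : R) : 2 <= M -> 0 < al -> al <= 1 / 2 ->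
  7 / 20 <= al ^+ 2 * M ->
  (1 + 1 / (8 * M)) * (1 - al / 2) ^+ 2 <= (1 - 2348 / 10000 / Num.sqrt M) ^+ 2.
Proof.
move=> M2 al0 al_half alM.
have qM : Num.sqrt M ^+ 2 = M by rewrite sqr_sqrtr //; lra.
have q0 := sqrtr_ge0 M.
set q := Num.sqrt M in qM q0 *.
have q_ge : 7 / 5 <= q by nra.
have qu : q * q^-1 = 1 by rewrite divff //; apply/eqP; lra.
set u := q^-1 in qu *.
have u0 : 0 < u by rewrite invr_gt0; lra.
have u_le : u <= 5 / 7 by nra.
have alq : 59 / 100 <= al * q.
  have : (al * q) ^+ 2 = al ^+ 2 * M by rewrite exprMn qM.
  by have := mulr_ge0 (ltW al0) q0; move=> alq0 alqM; nra.
have al_ge : 59 / 100 * u <= al.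
  have -> : al = al * q * u by rewrite -mulrA qu mulr1.
  by rewrite ler_wpM2r // ltW.
have -> : 1 / (8 * M) = u ^+ 2 / 8 by rewrite -qM /u; field; apply/eqP; lra.
apply: le_trans (contraction_poly_le u0 u_le); rewrite ler_wpM2l //.
  by rewrite addr_ge0 // divr_ge0 ?sqr_ge0.
by rewrite ler_sqr ?nnegrE; lra.
Qed.

End Contraction.

Section StepLength.
Variable R : realType.

Lemma alpha_of_bounds (mu T : R) : 0 < mu -> 0 <= T ->
  [/\ 0 < alpha_of mu T, alpha_of mu T <= 1 / 2 & alpha_of mu T ^+ 2 * T <= mu / 8].
Proof.
move=> mu0 T0; rewrite /alpha_of; case: eqP => [->|/eqP Tn0]; first by split; lra.
have Tpos : 0 < T by rewrite lt_def Tn0.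
have r2 : Num.sqrt (mu / (8 * T)) ^+ 2 = mu / (8 * T).
  by rewrite sqr_sqrtr // divr_ge0 //; lra.
have r0 : 0 < Num.sqrt (mu / (8 * T)) by rewrite sqrtr_gt0 divr_gt0 //; lra.
set r := Num.sqrt _ in r2 r0 *.
have rT : r ^+ 2 * T = mu / 8 by rewrite r2; field; lra.
have [le_r|lt_r] := lerP (1 / 2) r; split; try lra.
have : (1 / 2) ^+ 2 <= r ^+ 2 by rewrite ler_sqr ?nnegrE //; lra.
by move=> r2_ge; have := ler_wpM2r T0 r2_ge; lra.
Qed.

(* If [alpha] is not capped at [1 / 2], then [alpha ^+ 2 = mu / (8 T)], and
   [T <= M mu / (2 sqrt 2)] with [2 sqrt 2 / 8 > 7 / 20]. *)
Lemma alpha_of_ge (mu T M : R) : 0 < mu -> 0 <= T -> 2 <= M ->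
  T ^+ 2 <= M ^+ 2 * mu ^+ 2 / 8 -> 7 / 20 <= alpha_of mu T ^+ 2 * M.
Proof.
move=> mu0 T0 M2 TM; rewrite /alpha_of; case: eqP => [_|/eqP Tn0]; first lra.
have Tpos : 0 < T by rewrite lt_def Tn0.
have r2 : Num.sqrt (mu / (8 * T)) ^+ 2 = mu / (8 * T).
  by rewrite sqr_sqrtr // divr_ge0 //; lra.
set r := Num.sqrt _ in r2 *.
have [_|_] := lerP (1 / 2) r; first lra.
have T_le : T <= 5 / 14 * (M * mu).
  have K0 : 0 <= 5 / 14 * (M * mu) by rewrite !mulr_ge0 //; lra.
  have : T ^+ 2 <= (5 / 14 * (M * mu)) ^+ 2 by apply: le_trans TM _; rewrite !exprMn; nra.
  by move=> TK; nra.
by rewrite r2 mulrAC ler_pdivlMr; nra.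
Qed.

End StepLength.

Section NewtonSystem.
Variables (R : realType) (n : nat) (lam : R) (H : 'M[R]_n).

Lemma newton_sol_row (v s : 'cV[R]_(n + n)) sigma mu dz dv ds :
  newton_sol lam H v s sigma mu dz dv ds ->
  forall i, s i 0 * dv i 0 + v i 0 * ds i 0 = sigma * mu - v i 0 * s i 0.
Proof. by move=> [_ _ /matrixP row] i; move: (row i 0); rewrite !mxE mulr1. Qed.

(* Eliminating [ds] and [Omega dv] gives [dv^T ds = 2 lam dz^T H dz]. *)
Lemma newton_sol_dot_ge0 (v s : 'cV[R]_(n + n)) sigma mu dz dv ds :
  0 <= lam -> (forall x : 'cV[R]_n, 0 <= (x^T *m H *m x) 0 0) ->
  newton_sol lam H v s sigma mu dz dv ds -> 0 <= \sum_i dv i 0 * ds i 0.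
Proof.
move=> lam0 psd [/eqP e1 /eqP e2 _].
rewrite addrC addr_eq0 in e1; rewrite addrC addr_eq0 in e2.
have -> : \sum_i dv i 0 * ds i 0 = (dv^T *m ds) 0 0.
  by rewrite mxE; apply: eq_bigr => i _; rewrite mxE.
rewrite (eqP e2) mulmxN mulmxA -trmx_mul (eqP e1) linearN /= mulNmx opprK.
rewrite -scalemxAl linearZ /= -scalemxAl mxE mulr_ge0 //; first lra.
have -> : (H *m dz)^T *m dz = (dz^T *m H *m dz)^T by rewrite !trmx_mul trmxK mulmxA.
by rewrite mxE.
Qed.

End NewtonSystem.

Section ColumnVectors.
Variables (R : realType) (n : nat).

Lemma mu_ofE (v s : 'cV[R]_(n + n)) : mu_of v s = mean (fun i => v i 0 * s i 0).
Proof. by rewrite /mu_of /mean mul2n -addnn. Qed.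

Lemma norm2_sqr m (a : 'cV[R]_m) : norm2 a ^+ 2 = \sum_i a i 0 ^+ 2.
Proof.
have dotE : dotv a a = \sum_i a i 0 ^+ 2 by apply: eq_bigr => i _; rewrite expr2.
by rewrite /norm2 dotE sqr_sqrtr // sumr_ge0 // => i _; apply: sqr_ge0.
Qed.

Lemma col_addZ m (x y : 'cV[R]_m) a : (x + a *: y)^~ 0 = fun i => x i 0 + a * y i 0.
Proof. by apply: funext => i; rewrite !mxE. Qed.

Lemma col_add m (x y : 'cV[R]_m) : (x + y)^~ 0 = fun i => x i 0 + y i 0.
Proof. by apply: funext => i; rewrite !mxE. Qed.

Lemma mu_of_add (x y a b : 'cV[R]_(n + n)) :
  mu_of (x + a) (y + b) = mean (fun i => (x i 0 + a i 0) * (y i 0 + b i 0)).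
Proof. by rewrite mu_ofE /mean; congr (_ / _); apply: eq_bigr => i _; rewrite !mxE. Qed.

Lemma mu_of_addZ (x y a b : 'cV[R]_(n + n)) c :
  mu_of (x + c *: a) (y + c *: b) =
  mean (fun i => (x i 0 + c * a i 0) * (y i 0 + c * b i 0)).
Proof. by rewrite mu_ofE /mean; congr (_ / _); apply: eq_bigr => i _; rewrite !mxE. Qed.

Lemma mu_of_gt0 (theta : R) (v s : 'cV[R]_(n + n)) : (0 < n)%N ->
  central_nbhd theta (v^~ 0) (s^~ 0) -> 0 < mu_of v s.
Proof.
move=> n0 [vs_gt0 _]; rewrite mu_ofE mean_gt0 ?addn_gt0 ?n0 // => i.
by have [] := vs_gt0 i; apply: mulr_gt0.
Qed.

Section Steps.
Variables (lam : R) (H : 'M[R]_n).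
Hypotheses (n_gt0 : (0 < n)%N) (lam_ge0 : 0 <= lam)
  (H_psd : forall x : 'cV[R]_n, 0 <= (x^T *m H *m x) 0 0).

Lemma predictor_step_central (v s : 'cV[R]_(n + n)) dz dv ds :
  central_nbhd (1 / 4) (v^~ 0) (s^~ 0) ->
  newton_sol lam H v s 0 (mu_of v s) dz dv ds ->
  let al := alpha_of (mu_of v s) (norm2 (hadam dv ds - mu_of dv ds *: ones R (n + n))) in
  [/\ 0 < al <= 1 / 2, 7 / 20 <= al ^+ 2 * (n + n)%:R,
      central_nbhd (1 / 2) ((v + al *: dv)^~ 0) ((s + al *: ds)^~ 0) &
      mu_of (v + al *: dv) (s + al *: ds) <= (1 - al / 2) ^+ 2 * mu_of v s].
Proof.
move=> nb N; set T := norm2 _ => al; have [vs_gt0 vs_dev] := nb.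
have m0 : (0 < n + n)%N by rewrite addn_gt0 n_gt0.
have mu0 := mu_of_gt0 n_gt0 nb.
have newt i : s i 0 * dv i 0 + v i 0 * ds i 0 = 0 - v i 0 * s i 0.
  by rewrite (newton_sol_row N) mul0r.
have dot0 := newton_sol_dot_ge0 lam_ge0 H_psd N.
have T0 : 0 <= T by apply: sqrtr_ge0.
have T2 : T ^+ 2 = \sum_i (dv i 0 * ds i 0 - mean (fun j => dv j 0 * ds j 0)) ^+ 2.
  by rewrite norm2_sqr; apply: eq_bigr => i _; rewrite -mu_ofE !mxE mulr1.
have [al0 al_half alT] := alpha_of_bounds mu0 T0; rewrite -/al in al0 al_half alT.
rewrite mu_ofE in alT.
split; first by rewrite al0.
- apply: alpha_of_ge mu0 T0 _ _; first by rewrite (ler_nat R 2) (leq_add n_gt0 n_gt0).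
  rewrite T2 -exprMn mu_ofE; apply: le_trans (sum_sqr_centered_le _ m0) _.
  exact: predictor_sum_sqr_le m0 vs_gt0 newt dot0.
- have devT : \sum_i (dv i 0 * ds i 0 - mean (fun j => dv j 0 * ds j 0)) ^+ 2
      <= T ^+ 2 by rewrite T2.
  have := predictor_nbhd m0 vs_gt0 newt dot0 vs_dev T0 devT (ltW al0) al_half alT.
  by rewrite !col_addZ.
- by rewrite mu_of_addZ mu_ofE; apply: predictor_mean_le.
Qed.

Lemma corrector_step_central (v s : 'cV[R]_(n + n)) dz dv ds :
  central_nbhd (1 / 2) (v^~ 0) (s^~ 0) ->
  newton_sol lam H v s 1 (mu_of v s) dz dv ds ->
  central_nbhd (1 / 4) ((v + dv)^~ 0) ((s + ds)^~ 0) /\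
  mu_of (v + dv) (s + ds) <= (1 + 1 / (8 * (n + n)%:R)) * mu_of v s.
Proof.
move=> nb N; have m0 : (0 < n + n)%N by rewrite addn_gt0 n_gt0.
have newt i := newton_sol_row N i; rewrite mu_ofE in newt.
have dot0 := newton_sol_dot_ge0 lam_ge0 H_psd N.
rewrite !col_add mu_of_add mu_ofE; split.
- exact: corrector_nbhd m0 nb newt dot0.
- exact: corrector_mean_le m0 nb newt dot0.
Qed.

Lemma pc_step_central z (v s : 'cV[R]_(n + n)) z' v' s' :
  central_nbhd (1 / 4) (v^~ 0) (s^~ 0) -> pc_step lam H z v s z' v' s' ->
  central_nbhd (1 / 4) (v'^~ 0) (s'^~ 0) /\
  mu_of v' s' <= (1 - 2348 / 10000 / Num.sqrt (2 * n)%:R) ^+ 2 * mu_of v s.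
Proof.
move=> nb [dzp [dvp [dsp [dzc [dvc [dsc [Np [Nc [_ -> ->]]]]]]]]].
have [/andP[al0 al_half] alM nb_h muh] := predictor_step_central nb Np.
have [nb' mu'] := corrector_step_central nb_h Nc.
split=> //; apply: le_trans mu' _.
apply: le_trans (ler_wpM2l _ muh) _.
  by rewrite addr_ge0 // divr_ge0 // mulr_ge0 // ler0n.
rewrite mulrA ler_wpM2r ?(ltW (mu_of_gt0 n_gt0 nb)) // mul2n -addnn.
by apply: pc_factor_le; rewrite // (ler_nat R 2) (leq_add n_gt0 n_gt0).
Qed.

End Steps.

End ColumnVectors.

Section StartingPoint.
Variables (R : realType) (n : nat).

Lemma init_central (a : 'cV[R]_n) : (0 < n)%N -> dotv a a = 1 / 32 ->
  let v0 := col_mx (ones R n - a) (ones R n + a) in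
  let s0 := col_mx (ones R n) (ones R n) in
  central_nbhd (1 / 4) (v0^~ 0) (s0^~ 0) /\ mu_of v0 s0 = 1.
Proof.
move=> n0 aa v0 s0.
have s0E i : s0 i 0 = 1.
  by rewrite /s0; case: (split_ordP i) => j ->; rewrite ?col_mxEu ?col_mxEd mxE.
have wl j : v0 (lshift n j) 0 * s0 (lshift n j) 0 = 1 - a j 0.
  by rewrite s0E /v0 col_mxEu !mxE mulr1.
have wr j : v0 (rshift n j) 0 * s0 (rshift n j) 0 = 1 + a j 0.
  by rewrite s0E /v0 col_mxEd !mxE mulr1.
have mu1 : mean (fun i => v0 i 0 * s0 i 0) = 1.
  rewrite /mean big_split_ord /=; under eq_bigr do rewrite wl.
  under [X in _ + X]eq_bigr do rewrite wr.
  rewrite -big_split /= (eq_bigr (fun=> 2)) => [|i _]; last by ring.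
  rewrite sumr_const card_ord natrD -mulr_natl; field.
  by rewrite -natrD pnatr_eq0 -lt0n addn_gt0 n0.
have dev : \sum_i (v0 i 0 * s0 i 0 - 1) ^+ 2 = 1 / 16.
  rewrite big_split_ord /=; under eq_bigr do rewrite wl.
  under [X in _ + X]eq_bigr do rewrite wr.
  rewrite -big_split /= (eq_bigr (fun i => 2 * (a i 0 * a i 0))) => [|i _]; last by ring.
  by rewrite -mulr_sumr -/(dotv a a) aa; lra.
rewrite mu_ofE mu1; split=> //; split; last by rewrite mu1 dev; lra.
move=> i; split; last by rewrite s0E ltr01.
have := sqr_dev_le_sum (fun j => v0 j 0 * s0 j 0) 1 i.
by rewrite dev s0E mulr1 => dev_i; nra.
Qed.

Lemma dotv_init_scale (h : 'cV[R]_n) : h != 0 ->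
  let lam := 1 / (4 * Num.sqrt 2 * norm2 h) in dotv (lam *: h) (lam *: h) = 1 / 32.
Proof.
move=> h0 lam; have nh0 : norm2 h != 0.
  apply: contraNneq h0 => nh; apply/eqP/matrixP => i j; rewrite ord1 mxE.
  by apply: (@sum_sqr_le0 _ _ (h^~ 0)); rewrite -norm2_sqr nh expr0n.
have -> : dotv (lam *: h) (lam *: h) = lam ^+ 2 * norm2 h ^+ 2.
  by rewrite norm2_sqr mulr_sumr; apply: eq_bigr => i _; rewrite !mxE; ring.
by rewrite /lam expr_div_n !exprMn sqr_sqrtr //; field.
Qed.

End StartingPoint.

Lemma contraction_factor_bounds (R : realType) (N : R) : 2 <= N ->
  0 < 1 - 2348 / 10000 / Num.sqrt N < 1.
Proof.
move=> N2; have q0 := sqrtr_ge0 N.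
have q2 : Num.sqrt N ^+ 2 = N by rewrite sqr_sqrtr //; lra.
set q := Num.sqrt N in q0 q2 *.
have q_ge : 7 / 5 <= q by nra.
have q_gt0 : 0 < q by lra.
have a0 : 0 < 2348 / 10000 / q by apply: divr_gt0; lra.
have a1 : 2348 / 10000 / q < 1 by rewrite ltr_pdivrMr // mul1r; lra.
set a := 2348 / 10000 / q in a0 a1 *.
by rewrite subr_gt0 a1 ltrBlDr ltrDl a0.
Qed.

Lemma iteration_bound (R : realType) (N eps c mu : R) (k : nat) :
  0 < eps -> 0 < N -> 0 < c < 1 ->
  (Num.ceil (ln (N / eps) / (- 2 * ln c)) <= k%:Z)%R -> mu <= (c ^+ 2) ^+ k ->
  N * mu <= eps.
Proof.
move=> eps0 N0 /andP[c0 c1] hk muk.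
have lnc : ln c < 0 by apply: ln_lt0; rewrite c0 c1.
have Neps : 0 < N / eps by apply: divr_gt0.
have ck : 0 < (c ^+ 2) ^+ k by rewrite !exprn_gt0.
have k_ge : ln (N / eps) <= k%:R * (- 2 * ln c).
  rewrite -ler_pdivrMr; last lra.
  apply: le_trans (ceil_ge _) _.
  by rewrite -(ler_int R) in hk.
have ln_ck : ln ((c ^+ 2) ^+ k) = - (k%:R * (- 2 * ln c)).
  by rewrite lnXn ?exprn_gt0 // lnXn // -mulrnA -[ln c *+ _]mulr_natl natrM; ring.
have ck_le : (c ^+ 2) ^+ k <= eps / N.
  rewrite -ler_ln ?posrE ?divr_gt0 // ln_ck -invf_div lnV ?posrE //.
  by rewrite lerN2.
apply: le_trans (ler_wpM2l (ltW N0) (le_trans muk ck_le)) _.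
by rewrite mulrC mulfVK // gt_eqF.
Qed.

Theorem theorem1 (R : realType) (n : nat) (H : 'M[R]_n) (h : 'cV[R]_n)
  (eps : R)
  (z : nat -> 'cV[R]_n) (v s : nat -> 'cV[R]_(n + n)) :
  (0 < n)%N ->
  H^T = H ->
  (forall x : 'cV[R]_n, 0 <= (x^T *m H *m x) 0 0) ->
  h != 0 ->
  0 < eps ->
  let lam := 1 / (4 * Num.sqrt 2 * norm2 h) in
  z 0%N = 0 ->
  v 0%N = col_mx (ones R n - lam *: h) (ones R n + lam *: h) ->
  s 0%N = col_mx (ones R n) (ones R n) ->
  (forall k, pc_step lam H (z k) (v k) (s k) (z k.+1) (v k.+1) (s k.+1)) ->
  let c := 1 - ((2348 : R) / 10000) / Num.sqrt (2 * n)%:R in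
  (forall k, mu_of (v k.+1) (s k.+1) <= c ^+ 2 * mu_of (v k) (s k)) /\
  (forall k : nat,
     (Num.ceil (ln ((2 * n)%:R / eps) / (- 2 * ln c)) <= k%:Z)%R ->
     dotv (v k) (s k) <= eps).
Proof.
move=> n0 _ psd h0 eps0 lam _ v0E s0E step c.
have lam0 : 0 <= lam by rewrite divr_ge0 ?mulr_ge0 ?sqrtr_ge0.
have [nbhd0 mu0] := init_central n0 (dotv_init_scale h0).
rewrite -v0E -s0E in nbhd0 mu0.
have nbhd k : central_nbhd (1 / 4) ((v k)^~ 0) ((s k)^~ 0).
  by elim: k => // k IH; case: (pc_step_central n0 lam0 psd IH (step k)).
have contract k := (pc_step_central n0 lam0 psd (nbhd k) (step k)).2.
split=> // k k_ge.
have mu_k : mu_of (v k) (s k) <= (c ^+ 2) ^+ k.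
  elim: k {k_ge} => [|k IH]; first by rewrite mu0 expr0.
  apply: le_trans (contract k) _; rewrite [leRHS]exprS -/c.
  by apply: ler_wpM2l; first exact: sqr_ge0.
have N0 : 0 < (2 * n)%:R :> R by rewrite ltr0n muln_gt0.
have N2 : 2 <= (2 * n)%:R :> R by rewrite (ler_nat R 2) leq_pmulr.
rewrite -[dotv _ _](mulfVK (lt0r_neq0 N0)) mulrC.
exact: iteration_bound eps0 N0 (contraction_factor_bounds N2) k_ge mu_k.
Qed.
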